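(* Let $H\subset\mathrm{Aut}(K^n)$ be the subgroup generated by $\mathcal{S}_n$ and $\{\sigma_{ij}\}_{1\le i<j\le n}$. For $1\le i<j\le n$ and $t\in H$, if $t$ has a fixed point on $\Delta_{K*\mu,ij}$, then $t=(i,j)$ (the transposition) or $t=\mathrm{id}_{K^n}$.
   Context: $n\ge2$. $\mu:K\to E$ is the universal covering of an Enriques surface $E$ by a K3 surface, $\sigma$ its (fixed-point-free) covering involution. $\mathcal{S}_n$ acts on $K^n$ by permuting factors; $\sigma_{ij}$ applies $\sigma$ to coordinates $i$ and $j$. $E^n_*\subset E^n$ is the set of $n$-tuples with at most two coordinates equal (i.e. at most one pair of equal coordinates and no three equal). $K^n_{*\mu}=(\mu^n)^{-1}(E^n_* )$ where $\mu^n(x_1,\dots,x_n)=(\mu(x_1),\dots,\mu(x_n))$, and $\Delta_{K*\mu,ij}=\{(x_l)\in K^n_{*\mu}:x_i=x_j\}$. *)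

From HB Require Import structures.
From mathcomp Require Import all_boot all_order all_fingroup.
Set Implicit Arguments. Unset Strict Implicit. Unset Printing Implicit Defensive.

Definition fpf_involution (K : Type) (sigma : K -> K) : Prop :=
  (forall x, sigma (sigma x) = x) /\ (forall x, sigma x <> x).

Definition is_quotient_by (K E : Type) (sigma : K -> K) (mu : K -> E) : Prop :=
  (forall e, exists x, mu x = e) /\
  (forall x y, mu x = mu y <-> (y = x \/ y = sigma x)).

Definition perm_act (K : Type) (n : nat) (s : 'S_n) (x : 'I_n -> K) : 'I_n -> K :=
  fun l => x (s l).

Definition sigma_ij (K : Type) (n : nat) (sigma : K -> K) (i j : 'I_n)
  (x : 'I_n -> K) : 'I_n -> K :=
  fun l => if (l == i) || (l == j) then sigma (x l) else x l.

(* All generators are involutions/of finite order, so the generated subgroup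
   is the set of finite composites of generators (identity included). *)
Inductive inH (K : Type) (n : nat) (sigma : K -> K) :
  (('I_n -> K) -> ('I_n -> K)) -> Prop :=
| inH_id : inH sigma id
| inH_perm (s : 'S_n) t : inH sigma t -> inH sigma (perm_act s \o t)
| inH_sig (i j : 'I_n) t : (i < j)%N -> inH sigma t -> inH sigma (sigma_ij sigma i j \o t).

(* E^n_* : at most one pair of equal coordinates (hence no three equal). *)
Definition En_star (E : Type) (n : nat) (y : 'I_n -> E) : Prop :=
  forall a b c d : 'I_n, (a < b)%N -> (c < d)%N -> y a = y b -> y c = y d ->
    a = c /\ b = d.

Definition Kn_star_mu (K E : Type) (n : nat) (mu : K -> E) (x : 'I_n -> K) : Prop :=
  En_star (fun l => mu (x l)).

Definition Delta_K_star_mu (K E : Type) (n : nat) (mu : K -> E) (i j : 'I_n)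
  (x : 'I_n -> K) : Prop :=
  Kn_star_mu mu x /\ x i = x j.

From mathcomp Require Import all_boot all_order all_fingroup.
From Stdlib Require Import FunctionalExtensionality.
Set Implicit Arguments. Unset Strict Implicit. Unset Printing Implicit Defensive.

(* Every element of H acts as x |-> (sigma^(e l) (x (s l)))_l for a permutation
   s and signs e. If t fixes x in Delta_{K*mu,ij}, then mu (x l) = mu (x (s l)),
   and since (i, j) is the only pair of coordinates of x with equal images in E,
   s moves only i and j, so s is 1 or (i j). Then x (s l) = x l, and because
   sigma has no fixed point every sign e l must be trivial. *)

Definition signed_perm_act (K : Type) (n : nat) (sigma : K -> K) (s : 'S_n)
    (e : 'I_n -> bool) (x : 'I_n -> K) : 'I_n -> K :=
  fun l => if e l then sigma (x (s l)) else x (s l).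

Lemma inH_signed_perm_act (K : Type) (n : nat) (sigma : K -> K)
    (t : ('I_n -> K) -> ('I_n -> K)) :
  involutive sigma -> inH sigma t ->
  exists (s : 'S_n) (e : 'I_n -> bool), t = signed_perm_act sigma s e.
Proof.
move=> sigmaK; elim=> [|p {}t _ [s [e ->]]|i j {}t _ _ [s [e ->]]].
- exists 1%g, (fun=> false); do 2!apply: functional_extensionality => ?.
  by rewrite /signed_perm_act perm1.
- exists (p * s)%g, (e \o p); do 2!apply: functional_extensionality => ?.
  by rewrite /signed_perm_act /perm_act /= permM.
- exists s, (fun l => e l (+) ((l == i) || (l == j))).
  apply: functional_extensionality => y; apply: functional_extensionality => l.
  rewrite /signed_perm_act /sigma_ij /=.
  by case: (_ || _); case: (e l); rewrite /= ?sigmaK.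
Qed.

Lemma En_star_eq_in_pair (E : Type) (n : nat) (y : 'I_n -> E) (i j a b : 'I_n) :
  En_star y -> (i < j)%N -> y i = y j -> a != b -> y a = y b -> a \in [set i; j].
Proof.
move=> ystar ltij yij neqab yab; rewrite !inE.
have [ltab|ltba|/val_inj eqab] := ltngtP a b; last by rewrite eqab eqxx in neqab.
- by have [-> _] := ystar a b i j ltab ltij yab yij; rewrite eqxx.
- by have [_ ->] := ystar b a i j ltba ltij (esym yab) yij; rewrite eqxx orbT.
Qed.

Lemma perm_on_pair (T : finType) (a b : T) (s : {perm T}) :
  perm_on [set a; b] s -> s = 1%g \/ s = tperm a b.
Proof.
move=> son.
have s_in z : z \in [set a; b] -> s z = a \/ s z = b.
  by rewrite -(perm_closed _ son) !inE => /orP[] /eqP; [left|right].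
have s_out z : z \notin [set a; b] -> s z = z by apply: out_perm.
have a_in : a \in [set a; b] by rewrite !inE eqxx.
have b_in : b \in [set a; b] by rewrite !inE eqxx orbT.
have [sa_a|sa_neq] := eqVneq (s a) a.
- left; apply/permP => z; rewrite perm1.
  have sb_b : s b = b.
    by case: (s_in b b_in) => // sb_a; rewrite (perm_inj (etrans sb_a (esym sa_a))).
  by case: (boolP (z \in [set a; b])) => [/set2P[]->|/s_out].
- right; apply/permP => z.
  have sa_b : s a = b by case: (s_in a a_in) => // /eqP; rewrite (negbTE sa_neq).
  have sb_a : s b = a.
    case: (s_in b b_in) => // sb_b; rewrite -sb_b in sa_b.
    by move: sa_neq; rewrite (perm_inj sa_b) sb_b eqxx.
  case: tpermP => [->|->|za zb] //; apply: s_out.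
  by rewrite !inE; apply/norP; split; apply/eqP.
Qed.

Lemma signed_perm_act_fixed (K : Type) (n : nat) (sigma : K -> K) (s : 'S_n)
    (e : 'I_n -> bool) (x : 'I_n -> K) :
  (forall v, sigma v <> v) -> signed_perm_act sigma s e x = x ->
  (forall l, x (s l) = x l) -> signed_perm_act sigma s e = perm_act s.
Proof.
move=> sigma_fpf fix_x xs.
have e0 l : e l = false.
  have := congr1 (fun y => y l) fix_x; rewrite /signed_perm_act /= xs.
  by case: (e l) => // /sigma_fpf.
by do 2!apply: functional_extensionality => ?; rewrite /signed_perm_act e0.
Qed.

Theorem lemma2p3 (K E : Type) (sigma : K -> K) (mu : K -> E) (n : nat)
  (hn : (2 <= n)%N) (hsigma : fpf_involution sigma) (hmu : is_quotient_by sigma mu)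
  (i j : 'I_n) (hij : (i < j)%N)
  (t : ('I_n -> K) -> ('I_n -> K)) (ht : inH sigma t)
  (hfix : exists x, Delta_K_star_mu mu i j x /\ t x = x) :
  t = perm_act (tperm i j) \/ t = id.
Proof.
case: hsigma => sigmaK sigma_fpf; case: hmu => _ mu_fibre.
move: ht hfix => /(inH_signed_perm_act sigmaK) [s [e ->]] [x [[xstar xij] fix_x]].
have mu_xs l : mu (x (s l)) = mu (x l).
  apply/(mu_fibre _ _); have := congr1 (fun y => y l) fix_x.
  by rewrite /signed_perm_act /=; case: (e l) => <-; [right|left].
have son : perm_on [set i; j] s.
  apply/subsetP => l; rewrite inE eq_sym => nsl.
  exact: En_star_eq_in_pair xstar hij (congr1 mu xij) nsl (esym (mu_xs l)).
have s_cases := perm_on_pair son.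
have xs l : x (s l) = x l.
  by case: s_cases => ->; rewrite ?perm1 //; case: tpermP => // ->.
rewrite (signed_perm_act_fixed sigma_fpf fix_x xs).
case: s_cases => ->; [right | by left].
by do 2!apply: functional_extensionality => ?; rewrite /perm_act perm1.
Qed.
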